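(* Fix a finite monoid presentation $\langle A\mid R\rangle$ satisfying $C(4)$. There is an algorithm which, given $w\in A^*$ and a piece $p$, decides whether $w$ is $p$-active in constant time, i.e. in time bounded by a constant depending only on the presentation.
   Context: Relation words are the words occurring as a side of a pair in $R$. A piece is a word that is a factor of two distinct relation words, or occurs at two different (possibly overlapping) positions in a single relation word; $\varepsilon$ is a piece. $C(4)$: no relation word is a product of fewer than 4 pieces. For a relation word $u$, $X_u$ is its longest prefix that is a piece, $Z_u$ its longest suffix that is a piece, and $u=X_uY_uZ_u$ defines $Y_u$. A relation prefix of a word is a prefix of the form $aX_uY_u$ with $a\in A^*$ and $u$ a relation word. For a piece $p$, a word $w$ is $p$-active if $pw$ has a relation prefix $aX_uY_u$ with $|a|<|p|$. *)

From mathcomp Require Import all_boot.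
Set Implicit Arguments. Unset Strict Implicit. Unset Printing Implicit Defensive.

Section Presentation.
Variable A : finType.
Variable R : seq (seq A * seq A).

Definition relwords : seq (seq A) := flatten [seq [:: r.1; r.2] | r <- R].
Definition is_relword (u : seq A) : bool := u \in relwords.

Definition occurs_at (p u : seq A) (i : nat) : bool :=
  (i + size p <= size u) && (take (size p) (drop i u) == p).

Definition factor (p u : seq A) : bool := infix p u.

Definition is_piece (p : seq A) : bool :=
  [|| p == [::],
      has (fun u => has (fun v => [&& u != v, factor p u & factor p v]) relwords)
          relwords
    | has (fun u => has (fun i => has (fun j =>
             [&& i != j, occurs_at p u i & occurs_at p u j])
             (iota 0 (size u).+1)) (iota 0 (size u).+1)) relwords].

Definition C4 : Prop :=
  forall (u : seq A) (ps : seq (seq A)),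
    is_relword u -> all is_piece ps -> size ps < 4 -> flatten ps != u.

Definition Xlen (u : seq A) : nat :=
  \max_(k < (size u).+1 | is_piece (take k u)) (k : nat).
Definition Zlen (u : seq A) : nat :=
  \max_(k < (size u).+1 | is_piece (drop (size u - k) u)) (k : nat).
Definition X_ (u : seq A) : seq A := take (Xlen u) u.
Definition Z_ (u : seq A) : seq A := drop (size u - Zlen u) u.
(* Y_u defined by u = X_u Y_u Z_u *)
Definition Y_ (u : seq A) : seq A :=
  take (size u - Xlen u - Zlen u) (drop (Xlen u) u).

Definition p_active (p w : seq A) : Prop :=
  exists (a u : seq A),
    [/\ is_relword u, size a < size p & prefix (a ++ X_ u ++ Y_ u) (p ++ w)].

End Presentation.

(* Model of algorithms with random read access to the input word: a decision
   tree which at each step queries the letter at some position i of w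
   (answer None if i >= |w|) and finally outputs a boolean. *)
Inductive dtree (A : Type) : Type :=
| Leaf of bool
| Query of nat & (option A -> dtree A).

(* run the tree on w for at most [fuel] queries; None = time bound exceeded *)
Fixpoint run (A : Type) (t : dtree A) (w : seq A) (fuel : nat) : option bool :=
  match t with
  | Leaf b => Some b
  | Query i k =>
      match fuel with
      | 0 => None
      | n.+1 => run (k (onth w i)) w n
      end
  end.

(* Whether w is p-active depends only on the first M letters of w, where M
   bounds the lengths of the relation words: a relation prefix a X_u Y_u of
   p w with |a| < |p| has length below |p| + |u|.  So for every p the decision
   tree that reads the first M letters of w and then tests the finitely many
   candidates (u, a) decides p-activity within M queries. *)
From mathcomp Require Import all_boot.
Set Implicit Arguments. Unset Strict Implicit. Unset Printing Implicit Defensive.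

Lemma onth_ohead_drop (T : Type) (s : seq T) i : onth s i = ohead (drop i s).
Proof. by elim: s i => [|x s IHs] [|i] //=; rewrite IHs. Qed.

Lemma dropS_behead (T : Type) (s : seq T) i : drop i.+1 s = behead (drop i s).
Proof. by rewrite !drop_behead iterS. Qed.

Lemma prefix_take_le (T : eqType) (s t : seq T) n :
  size s <= n -> prefix s (take n t) = prefix s t.
Proof. by move=> le_s_n; rewrite !prefixE take_takel. Qed.

Lemma prefix_cat_take (T : eqType) (a p w : seq T) :
  size a < size p -> prefix a (p ++ w) -> a = take (size a) p.
Proof. by move=> lt_a_p; rewrite prefixE take_cat lt_a_p => /eqP. Qed.

Fixpoint read_prefix (T : Type) (n i : nat) (f : seq T -> bool) : dtree T :=
  if n is n'.+1 then
    Query i (fun o => if o is Some x then read_prefix n' i.+1 (fun s => f (x :: s))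
                      else Leaf T (f [::]))
  else Leaf T (f [::]).

Lemma run_read_prefix (T : Type) n i (f : seq T -> bool) w fuel :
  n <= fuel -> run (read_prefix n i f) w fuel = Some (f (take n (drop i w))).
Proof.
elim: n i f fuel => [|n IHn] i f [|fuel] //= le_n_fuel; rewrite ?take0 //.
rewrite onth_ohead_drop; case def_w: (drop i w) => [|x s] //=.
by rewrite IHn // dropS_behead def_w.
Qed.

Section Activity.
Variables (A : finType) (R : seq (seq A * seq A)).

Lemma size_XY (u : seq A) : size (X_ R u ++ Y_ R u) <= size u.
Proof. by rewrite /X_ /Y_ -takeD size_take_min geq_minr. Qed.

Definition p_activeb (p w : seq A) : bool :=
  has (fun u => has (fun k => prefix (take k p ++ X_ R u ++ Y_ R u) (p ++ w))
                    (iota 0 (size p)))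
      (relwords R).

Lemma p_activeP p w : reflect (p_active R p w) (p_activeb p w).
Proof.
apply: (iffP hasP) => [[u u_rel /hasP[k]]|[a [u [u_rel lt_a_p pre]]]].
  rewrite mem_iota => /andP[_ lt_k_p] pre.
  exists (take k p), u; split=> //.
  by rewrite size_take_min (leq_ltn_trans (geq_minl _ _)).
exists u => //; apply/hasP; exists (size a); first by rewrite mem_iota.
by rewrite -(prefix_cat_take lt_a_p (prefix_trans (prefix_prefix _ _) pre)).
Qed.

Definition relword_max : nat := \max_(u <- relwords R) size u.

Lemma size_relword_max u : u \in relwords R -> size u <= relword_max.
Proof. by move=> u_rel; exact: (@leq_bigmax_seq _ _ xpredT size u). Qed.

Lemma p_activeb_take p w : p_activeb p (take relword_max w) = p_activeb p w.
Proof.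
apply: eq_in_has => u u_rel; apply: eq_in_has => k _.
have -> : p ++ take relword_max w = take (size p + relword_max) (p ++ w).
  by rewrite takeD take_size_cat // drop_size_cat.
apply: prefix_take_le; rewrite size_cat size_take_min leq_add ?geq_minr //.
exact: leq_trans (size_XY u) (size_relword_max u_rel).
Qed.

End Activity.

Theorem lemma6p16 (A : finType) (R : seq (seq A * seq A)) :
  C4 R ->
  exists (c : nat) (T : seq A -> dtree A),
    forall (p w : seq A), is_piece R p ->
      exists b : bool, run (T p) w c = Some b /\ (b <-> p_active R p w).
Proof.
move=> _; pose M := relword_max R.
exists M, (fun p => read_prefix M 0 (p_activeb R p)).
move=> p w _; exists (p_activeb R p w); split.
  by rewrite run_read_prefix // drop0 p_activeb_take.
by split=> /p_activeP.
Qed.
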